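(* Let $K$ be $(\kappa,\gamma)$-strongly stable. Let $\{M_t\}_{t=-H-1}^0$ be arbitrary with $M_t\in\mathcal M$, and let $\{M_t\}_{t=1}^{T-1}$ be generated by projected online gradient descent with constant learning rate $\eta>0$: $M_{t+1}=\Pi_{\mathcal M}(M_t-\eta\nabla_Mf_t(M_t))$, where $\Pi_{\mathcal M}(X)=\arg\min_{M'\in\mathcal M}\|X-M'\|_F$. Assume there is $L_c>0$ such that for every $k\in[0,H+1]$, $t\in[0,T-1]$ and $M_{t-1-H},\dots,M_t,\check M_{t-k}\in\mathcal M$, $$|F_t(M_{t-1-H:t})-F_t(M_{t-1-H:t-k-1},\check M_{t-k},M_{t-k+1:t})|\le L_c\|M_{t-k}-\check M_{t-k}\|_F.$$ Then, with $D:=\frac{4\kappa_B\kappa^3\sqrt n}{\gamma}$, for every $M\in\mathcal M$, $$\sum_{t=0}^{T-1}F_t(M_{t-1-H:t})-\sum_{t=0}^{T-1}f_t(M)\le L_c\eta\sum_{t=0}^{T-1}\sum_{i=1}^{\min\{H+1,t\}}\sum_{k=1}^i\|\nabla_Mf_{t-k}(M_{t-k})\|_F+\frac{D^2}{2\eta}+\frac\eta2\sum_{t=0}^{T-1}\|\nabla_Mf_t(M_t)\|_F^2.$$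
   Context: Linear system $x_{t+1}=Ax_t+Bu_t+w_t$; $n:=\max\{n_x,n_u\}$, $\kappa_B:=\max\{\|B\|,1\}$; $w_s:=0$ for $s<0$; $H$ a positive integer. $(\kappa,\gamma)$-strong stability: complex $P,Q$ with $A-BK=QPQ^{-1}$, $\|P\|\le1-\gamma$, $\|K\|,\|Q\|,\|Q^{-1}\|\le\kappa$. $A_K:=A-BK$. For $M=\{M^{[0]},\dots,M^{[H-1]}\}$, $\|M\|_F:=\|[M^{[0]},\dots,M^{[H-1]}]\|_F$. $\mathcal M:=\{M:\|M^{[i]}\|\le2\kappa_B\kappa^3(1-\gamma)^i\}$. Surrogate: $\Psi^{K,h}_{t,i}(M_{t-h:t}):=A_K^i\mathbf 1_{i\le h}+\sum_{j=0}^hA_K^jBM_{t-j}^{[i-j-1]}\mathbf 1_{i-j\in[1,H]}$; $y_t:=\sum_{i=0}^{2H}\Psi^{K,H}_{t-1,i}(M_{t-1-H:t-1})w_{t-1-i}$; $v_t:=-Ky_t+\sum_{i=1}^HM_t^{[i-1]}w_{t-i}$; $F_t(M_{t-1-H:t}):=c_t(y_t,v_t)$ for differentiable convex $c_t$; $f_t(M):=F_t(M,\dots,M)$. The statement holds for any fixed realization of the noise. *)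

From mathcomp Require Import all_boot all_order all_algebra.
From mathcomp Require Import all_classical all_reals all_analysis.
From mathcomp.real_closed Require Import complex.
Set Implicit Arguments.
Unset Strict Implicit.
Unset Printing Implicit Defensive.
Import Order.TTheory GRing.Theory Num.Theory.
Import numFieldNormedType.Exports.
Local Open Scope ring_scope.

Section LQCDefs.
Variable R : realType.

Definition vnorm {n} (x : 'cV[R]_n) : R := Num.sqrt (\sum_i x i 0 ^+ 2).
Definition opnorm {m n} (M : 'M[R]_(m, n)) : R :=
  sup [set vnorm (M *m x) | x in [set x : 'cV[R]_n | vnorm x <= 1]].

Definition cabs2 (z : R[i]) : R := complex.Re z ^+ 2 + complex.Im z ^+ 2.
Definition vnormC {n} (x : 'cV[R[i]]_n) : R := Num.sqrt (\sum_i cabs2 (x i 0)).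
Definition opnormC {m n} (M : 'M[R[i]]_(m, n)) : R :=
  sup [set vnormC (M *m x) | x in [set x : 'cV[R[i]]_n | vnormC x <= 1]].

Definition mxC {m n} (M : 'M[R]_(m, n)) : 'M[R[i]]_(m, n) :=
  map_mx (fun a => (a%:C)%C) M.

Definition strongly_stable {nx nu} (A : 'M[R]_nx) (B : 'M[R]_(nx, nu))
    (K : 'M[R]_(nu, nx)) (kappa gamma : R) : Prop :=
  0 < gamma /\
  exists P Q : 'M[R[i]]_nx,
    [/\ Q \in unitmx, mxC (A - B *m K) = Q *m P *m invmx Q &
        [/\ opnormC P <= 1 - gamma, opnorm K <= kappa,
             opnormC Q <= kappa & opnormC (invmx Q) <= kappa]].

Definition kappaB {nx nu} (B : 'M[R]_(nx, nu)) : R := Num.max (opnorm B) 1.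

Definition Mtype (nu nx H : nat) := {ffun 'I_H -> 'M[R]_(nu, nx)}.

(** M^[k] as a function of a natural index (0 outside [0, H-1];
    only used under the guards of the paper). *)
Definition Mcomp {nu nx H} (M : Mtype nu nx H) (k : nat) : 'M[R]_(nu, nx) :=
  match (insub k : option 'I_H) with Some i => M i | None => 0 end.

Definition frob {nu nx H} (M : Mtype nu nx H) : R :=
  Num.sqrt (\sum_(i < H) \sum_a \sum_b (M i a b) ^+ 2).
Definition frob_inner {nu nx H} (G X : Mtype nu nx H) : R :=
  \sum_(i < H) \sum_a \sum_b G i a b * X i a b.

Definition inMset {nx nu H} (B : 'M[R]_(nx, nu)) (kappa gamma : R)
    (M : Mtype nu nx H) : Prop :=
  forall i : 'I_H, opnorm (M i) <= 2 * kappaB B * kappa ^+ 3 * (1 - gamma) ^+ i.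

Definition Psi {nx nu H} (A : 'M[R]_nx) (B : 'M[R]_(nx, nu)) (K : 'M[R]_(nu, nx))
    (Ms : int -> Mtype nu nx H) (t : int) (h i : nat) : 'M[R]_nx :=
  (if (i <= h)%N then (A - B *m K) ^+ i else 0) +
  \sum_(j < h.+1)
     (if ((j < i) && (i - j <= H))%N
      then (A - B *m K) ^+ j *m B *m Mcomp (Ms (t - j%:Z)) (i - j - 1)
      else 0).

Definition ysur {nx nu H} (A : 'M[R]_nx) (B : 'M[R]_(nx, nu)) (K : 'M[R]_(nu, nx))
    (w : int -> 'cV[R]_nx) (Ms : int -> Mtype nu nx H) (t : int) : 'cV[R]_nx :=
  \sum_(i < (2 * H).+1) Psi A B K Ms (t - 1) H i *m w (t - 1 - i%:Z).

(** v_t = -K y_t + sum_{i=1}^H M_t^[i-1] w_{t-i} (reindexed i -> i+1). *)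
Definition vsur {nx nu H} (A : 'M[R]_nx) (B : 'M[R]_(nx, nu)) (K : 'M[R]_(nu, nx))
    (w : int -> 'cV[R]_nx) (Ms : int -> Mtype nu nx H) (t : int) : 'cV[R]_nu :=
  - (K *m ysur A B K w Ms t) + \sum_(i < H) Ms t i *m w (t - (i.+1)%:Z).

Definition Fsur {nx nu H} (A : 'M[R]_nx) (B : 'M[R]_(nx, nu)) (K : 'M[R]_(nu, nx))
    (w : int -> 'cV[R]_nx) (c : int -> 'cV[R]_nx * 'cV[R]_nu -> R)
    (t : int) (Ms : int -> Mtype nu nx H) : R :=
  c t (ysur A B K w Ms t, vsur A B K w Ms t).

Definition fsur {nx nu H} (A : 'M[R]_nx) (B : 'M[R]_(nx, nu)) (K : 'M[R]_(nu, nx))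
    (w : int -> 'cV[R]_nx) (c : int -> 'cV[R]_nx * 'cV[R]_nu -> R)
    (t : int) (M : Mtype nu nx H) : R :=
  Fsur A B K w c t (fun _ => M).

Definition upd {T : Type} (Ms : int -> T) (s : int) (X : T) : int -> T :=
  fun r => if r == s then X else Ms r.

Definition is_gradient {nu nx H} (f : Mtype nu nx H -> R) (M G : Mtype nu nx H) : Prop :=
  forall X : Mtype nu nx H,
    is_derive (0 : R) (1 : R) (fun s : R => f (M + s *: X)) (frob_inner G X).

Definition is_proj {nx nu H} (B : 'M[R]_(nx, nu)) (kappa gamma : R)
    (X Y : Mtype nu nx H) : Prop :=
  inMset B kappa gamma Y /\
  forall M', inMset B kappa gamma M' -> frob (X - Y) <= frob (X - M').

Definition convex_fun {V : lmodType R} (f : V -> R) : Prop :=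
  forall (x y : V) (a : R), 0 <= a <= 1 ->
    f (a *: x + (1 - a) *: y) <= a * f x + (1 - a) * f y.

End LQCDefs.

(* Replacing the past iterates M_{t-1}, ..., M_{t-min(H+1,t)} one at a time by M_t
   costs, by the Lipschitz hypothesis, at most L_c times the drift ||M_{t-i} - M_t||_F,
   and since the projection is nonexpansive each drift is at most eta times the sum of
   the gradient norms in between; this turns F_t(M_{t-1-H:t}) into f_t(M_t).
   As y_t and v_t are affine in M, f_t inherits convexity from c_t, so
   f_t(M_t) - f_t(M) <= <grad f_t(M_t), M_t - M>, and the usual telescoping of
   ||M_t - M||_F^2 along projected gradient steps bounds the sum of these inner
   products by ||M_0 - M||_F^2 / (2 eta) + eta/2 sum ||grad f_t(M_t)||_F^2.
   Finally ||M_0 - M||_F <= D, since each block obeys ||X||_F^2 <= n ||X||^2 and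
   sum_i (1 - gamma)^(2 i) <= 1 / gamma^2. *)

From mathcomp Require Import all_boot all_order all_algebra.
From mathcomp Require Import all_classical all_reals all_analysis.
From mathcomp.real_closed Require Import complex.
From mathcomp Require Import ring lra zify.
Import Order.TTheory GRing.Theory Num.Theory.
Import numFieldNormedType.Exports.
Local Open Scope ring_scope.

Section ConvexReal.
Context {R : realType} {phi : R -> R}.
Hypothesis phi_convex : forall s1 s2 a : R, 0 <= a <= 1 ->
  phi (a * s1 + (1 - a) * s2) <= a * phi s1 + (1 - a) * phi s2.

Lemma convex_slope0_le (h : R) : h != 0 -> -1 < h <= 1 ->
  h^-1 * (phi h - phi 0) <= phi 1 - phi 0.
Proof.
move=> h0 /andP[hm1 h1]; have [hp|hn] := ltrP 0 h.
  have h01 : 0 <= h <= 1 by rewrite (ltW hp) h1.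
  have := phi_convex 1 0 h h01; rewrite mulr1 mulr0 addr0 => le.
  rewrite mulrC ler_pdivrMr //; lra.
have hneg : h < 0 by rewrite lt_neqAle h0 hn.
have lp : 0 < 1 - h by lra.
set l := (1 - h)^-1.
have l01 : 0 <= l <= 1.
  by rewrite invr_ge0 ltW //= invr_le1 ?unitfE ?gt_eqF //; lra.
(* For h < 0, the point 0 is the convex combination l * h + (1 - l) * 1. *)
have := phi_convex h 1 l l01.
have -> : l * h + (1 - l) * 1 = 0 by rewrite /l; field; lra.
move=> le; rewrite mulrC ler_ndivrMr //.
have e : (1 - h) * (l * phi h + (1 - l) * phi 1) = phi h - h * phi 1.
  by rewrite /l; field; lra.
have : (1 - h) * phi 0 <= phi h - h * phi 1 by rewrite -e ler_pM2l.
lra.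
Qed.

Lemma convex_derive0_le (d : R) : is_derive (0 : R) (1 : R) phi d -> d <= phi 1 - phi 0.
Proof.
move=> [dv <-]; apply: limr_le => //; near=> h.
rewrite /= /shift addr0 /GRing.scale /= mulr1.
apply: convex_slope0_le.
- by near: h; exact: nbhs_dnbhs_neq.
- have : `|h| < 1 by near: h; exact: dnbhs0_lt.
  by rewrite ltr_norml => /andP[-> /ltW ->].
Unshelve. all: by end_near.
Qed.

End ConvexReal.

Section EuclideanNorm.
Context {R : realType} {I : finType}.
Implicit Types F G : I -> R.

Definition l2norm F : R := Num.sqrt (\sum_i F i ^+ 2).

Lemma sum_sqr_ge0 F : 0 <= \sum_i F i ^+ 2.
Proof. by apply: sumr_ge0 => i _; exact: sqr_ge0. Qed.

Lemma sum_mul_sqr_le F G :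
  (\sum_i F i * G i) ^+ 2 <= (\sum_i F i ^+ 2) * (\sum_i G i ^+ 2).
Proof.
set a := \sum_i F i ^+ 2; set b := \sum_i F i * G i; set c := \sum_i G i ^+ 2.
have a0 : 0 <= a := sum_sqr_ge0 F.
have c0 : 0 <= c := sum_sqr_ge0 G.
have quad_ge0 s : 0 <= a - 2 * s * b + s ^+ 2 * c.
  have -> : a - 2 * s * b + s ^+ 2 * c = \sum_i (F i - s * G i) ^+ 2.
    rewrite /a /b /c !mulr_sumr -sumrN -!big_split /=.
    by apply: eq_bigr => i _; ring.
  exact: sum_sqr_ge0.
have [cp|] := ltrP 0 c.
  have := quad_ge0 (b / c).
  have -> : a - 2 * (b / c) * b + (b / c) ^+ 2 * c = a - b ^+ 2 / c by field; lra.
  by rewrite subr_ge0 ler_pdivrMr // mulrC.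
move=> cle; have {cle}c00 : c = 0 by lra.
suff -> : b = 0 by rewrite c00; lra.
apply/eqP/negPn/negP => bn0.
have := quad_ge0 ((a + 1) / (2 * b)); rewrite c00 mulr0 addr0.
have -> : 2 * ((a + 1) / (2 * b)) * b = a + 1 by field; rewrite bn0 /=; lra.
lra.
Qed.

Lemma l2norm_ge0 F : 0 <= l2norm F.
Proof. exact: sqrtr_ge0. Qed.

Lemma l2norm_sqr F : l2norm F ^+ 2 = \sum_i F i ^+ 2.
Proof. by rewrite sqr_sqrtr // sum_sqr_ge0. Qed.

Lemma sum_mul_le_l2norm F G : \sum_i F i * G i <= l2norm F * l2norm G.
Proof.
apply: le_trans (ler_norm _) _.
rewrite -(ger0_norm (mulr_ge0 (l2norm_ge0 F) (l2norm_ge0 G))).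
rewrite -ler_sqr ?normr_ge0 // !real_normK ?num_real // exprMn !l2norm_sqr.
exact: sum_mul_sqr_le.
Qed.

Lemma l2normD F G : l2norm (fun i => F i + G i) <= l2norm F + l2norm G.
Proof.
rewrite -ler_sqr ?nnegrE ?addr_ge0 ?l2norm_ge0 // l2norm_sqr.
have -> : \sum_i (F i + G i) ^+ 2
    = \sum_i F i ^+ 2 + 2 * \sum_i F i * G i + \sum_i G i ^+ 2.
  by rewrite mulr_sumr -!big_split /=; apply: eq_bigr => i _; ring.
rewrite -!l2norm_sqr; have := sum_mul_le_l2norm F G; nra.
Qed.

Lemma l2normZ a F : l2norm (fun i => a * F i) = `|a| * l2norm F.
Proof.
rewrite /l2norm -sqrtr_sqr -sqrtrM ?sqr_ge0 // mulr_sumr.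
by congr Num.sqrt; apply: eq_bigr => i _; rewrite exprMn.
Qed.

Lemma eq_l2norm F G : F =1 G -> l2norm F = l2norm G.
Proof. by move=> FG; rewrite /l2norm; congr Num.sqrt; apply: eq_bigr => i _; rewrite FG. Qed.

End EuclideanNorm.

Section Frobenius.
Context {R : realType} {nu nx H : nat}.
Implicit Types X Y G : Mtype R nu nx H.

Definition mx_entries X (p : 'I_H * 'I_nu * 'I_nx) : R := X p.1.1 p.1.2 p.2.

Lemma frobE X : frob X = l2norm (mx_entries X).
Proof. by rewrite /frob /l2norm !pair_bigA. Qed.

Lemma frob_innerE G X : frob_inner G X = \sum_p mx_entries G p * mx_entries X p.
Proof. by rewrite /frob_inner !pair_bigA. Qed.

Lemma mx_entriesD X Y p : mx_entries (X + Y) p = mx_entries X p + mx_entries Y p.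
Proof. by rewrite /mx_entries !ffunE !mxE. Qed.

Lemma mx_entriesZ a X p : mx_entries (a *: X) p = a * mx_entries X p.
Proof. by rewrite /mx_entries !ffunE !mxE. Qed.

Lemma frob_ge0 X : 0 <= frob X.
Proof. exact: sqrtr_ge0. Qed.

Lemma frob0 : frob (0 : Mtype R nu nx H) = 0.
Proof.
rewrite frobE /l2norm big1 ?sqrtr0 // => p _.
by rewrite /mx_entries !ffunE !mxE expr0n.
Qed.

Lemma frobD X Y : frob (X + Y) <= frob X + frob Y.
Proof.
rewrite !frobE (@eq_l2norm _ _ _ (fun p => mx_entries X p + mx_entries Y p)).
  exact: l2normD.
exact: mx_entriesD.
Qed.

Lemma frobZ a X : frob (a *: X) = `|a| * frob X.
Proof. by rewrite !frobE -l2normZ; apply: eq_l2norm => p; exact: mx_entriesZ. Qed.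

Lemma frobN X : frob (- X) = frob X.
Proof. by rewrite -scaleN1r frobZ normrN normr1 mul1r. Qed.

Lemma frobC X Y : frob (X - Y) = frob (Y - X).
Proof. by rewrite -frobN opprB. Qed.

Lemma frob_innerC G X : frob_inner G X = frob_inner X G.
Proof. by rewrite !frob_innerE; apply: eq_bigr => p _; rewrite mulrC. Qed.

Lemma frob_innerDr G X Y :
  frob_inner G (X + Y) = frob_inner G X + frob_inner G Y.
Proof.
by rewrite !frob_innerE -big_split; apply: eq_bigr => p _; rewrite mx_entriesD mulrDr.
Qed.

Lemma frob_innerZr a G X : frob_inner G (a *: X) = a * frob_inner G X.
Proof.
by rewrite !frob_innerE mulr_sumr; apply: eq_bigr => p _; rewrite mx_entriesZ mulrCA.
Qed.

Lemma frob_innerBr G X Y :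
  frob_inner G (X - Y) = frob_inner G X - frob_inner G Y.
Proof. by rewrite frob_innerDr -scaleN1r frob_innerZr mulN1r. Qed.

Lemma frob_sqr X : frob X ^+ 2 = frob_inner X X.
Proof. by rewrite frobE l2norm_sqr frob_innerE; apply: eq_bigr => p _; rewrite expr2. Qed.

Lemma frob_sqrD X Y :
  frob (X + Y) ^+ 2 = frob X ^+ 2 + 2 * frob_inner X Y + frob Y ^+ 2.
Proof.
rewrite !frob_sqr frob_innerDr !(frob_innerC (X + Y)) !frob_innerDr (frob_innerC Y X).
ring.
Qed.

Lemma frob_sqrB X Y :
  frob (X - Y) ^+ 2 = frob X ^+ 2 - 2 * frob_inner X Y + frob Y ^+ 2.
Proof. by rewrite frob_sqrD frobN -scaleN1r frob_innerZr; ring. Qed.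

End Frobenius.

Section OperatorNorm.
Context {R : realType}.

Lemma vnormE {n} (x : 'cV[R]_n) : vnorm x = l2norm (fun i => x i 0).
Proof. by []. Qed.

Lemma vnorm_ge0 {n} (x : 'cV[R]_n) : 0 <= vnorm x.
Proof. exact: sqrtr_ge0. Qed.

Lemma vnorm0 {n} : vnorm (0 : 'cV[R]_n) = 0.
Proof. by rewrite /vnorm big1 ?sqrtr0 // => i _; rewrite mxE expr0n. Qed.

Lemma vnormD {n} (x y : 'cV[R]_n) : vnorm (x + y) <= vnorm x + vnorm y.
Proof.
rewrite !vnormE (@eq_l2norm _ _ _ (fun i => x i 0 + y i 0)); first exact: l2normD.
by move=> i; rewrite mxE.
Qed.

Lemma vnormZ {n} a (x : 'cV[R]_n) : vnorm (a *: x) = `|a| * vnorm x.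
Proof. by rewrite !vnormE -l2normZ; apply: eq_l2norm => i; rewrite mxE. Qed.

Lemma vnorm_mul_le_frobenius {m n} (M : 'M[R]_(m, n)) (x : 'cV[R]_n) :
  vnorm x <= 1 -> vnorm (M *m x) <= Num.sqrt (\sum_i \sum_j M i j ^+ 2).
Proof.
move=> x1; apply: ler_wsqrtr; apply: ler_sum => i _; rewrite mxE.
apply: le_trans (sum_mul_sqr_le (fun j => M i j) (fun j => x j 0)) _.
rewrite -[X in _ * X]l2norm_sqr -vnormE -[leRHS]mulr1 ler_wpM2l ?sum_sqr_ge0 //.
by rewrite -(expr1n _ 2) ler_pXn2r // ?nnegrE ?vnorm_ge0.
Qed.

Lemma vnorm_mul_le_opnorm {m n} (M : 'M[R]_(m, n)) (x : 'cV[R]_n) :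
  vnorm x <= 1 -> vnorm (M *m x) <= opnorm M.
Proof.
move=> x1; apply: ub_le_sup; last by exists x.
exists (Num.sqrt (\sum_i \sum_j M i j ^+ 2)) => _ [y y1 <-].
exact: vnorm_mul_le_frobenius.
Qed.

Lemma opnorm_ge0 {m n} (M : 'M[R]_(m, n)) : 0 <= opnorm M.
Proof. by rewrite -(@vnorm0 m) -(mulmx0 _ M) vnorm_mul_le_opnorm // vnorm0. Qed.

Lemma opnorm_le {m n} (M : 'M[R]_(m, n)) b :
  (forall x : 'cV[R]_n, vnorm x <= 1 -> vnorm (M *m x) <= b) -> opnorm M <= b.
Proof.
move=> Mb; apply: ge_sup; first by exists (vnorm (M *m 0)), 0; rewrite //= vnorm0.
by move=> _ [x x1 <-]; exact: Mb.
Qed.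

Lemma opnorm_lincomb_le {m n} a b (P Q : 'M[R]_(m, n)) :
  opnorm (a *: P + b *: Q) <= `|a| * opnorm P + `|b| * opnorm Q.
Proof.
apply: opnorm_le => x x1; rewrite mulmxDl -!scalemxAl.
apply: le_trans (vnormD _ _) _; rewrite !vnormZ.
by apply: lerD; apply: ler_wpM2l; rewrite ?normr_ge0 ?vnorm_mul_le_opnorm.
Qed.

Lemma sum_sqr_le_opnorm {m n} (X : 'M[R]_(m, n)) :
  \sum_i \sum_j X i j ^+ 2 <= n%:R * opnorm X ^+ 2.
Proof.
rewrite exchange_big /=.
have -> : n%:R * opnorm X ^+ 2 = \sum_(j < n) opnorm X ^+ 2.
  by rewrite sumr_const card_ord mulr_natl.
apply: ler_sum => j _.
have e_j1 : vnorm (delta_mx j 0 : 'cV[R]_n) = 1.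
  rewrite /vnorm (bigD1 j) //= big1 ?addr0 ?mxE ?eqxx ?expr1n ?sqrtr1 //.
  by move=> i /negbTE ij; rewrite mxE ij expr0n.
have := vnorm_mul_le_opnorm X (delta_mx j 0).
rewrite e_j1 lexx -colE => /(_ isT) col_le.
have -> : \sum_i X i j ^+ 2 = vnorm (col j X) ^+ 2.
  by rewrite /vnorm sqr_sqrtr ?sum_sqr_ge0 //; apply: eq_bigr => i _; rewrite mxE.
by rewrite ler_pXn2r // ?nnegrE ?vnorm_ge0 ?opnorm_ge0.
Qed.

Lemma opnormC_ge0 {m n} (M : 'M[R[i]]_(m, n)) : 0 <= opnormC M.
Proof.
rewrite /opnormC.
set S := [set vnormC (M *m x) | x in [set x : 'cV[R[i]]_n | vnormC x <= 1]]%classic.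
have [supS|/sup_out ->] := pselect (has_sup S); last by [].
have vnormC0 k : vnormC (0 : 'cV[R[i]]_k) = 0.
  by rewrite /vnormC big1 ?sqrtr0 // => i _; rewrite mxE /cabs2 /= expr0n addr0.
rewrite -(vnormC0 m) -(mulmx0 _ M); apply: (ub_le_sup supS.2).
by exists 0; rewrite //= vnormC0.
Qed.

End OperatorNorm.

Lemma strongly_stable_gamma {R : realType} {nx nu} {A : 'M[R]_nx} {B : 'M[R]_(nx, nu)}
    {K : 'M[R]_(nu, nx)} {kappa gamma : R} :
  strongly_stable A B K kappa gamma -> 0 < gamma <= 1.
Proof.
by case=> g0 [P [Q [_ _ [P_le _ _ _]]]]; have := opnormC_ge0 P; rewrite g0 /=; lra.
Qed.

Ltac mtype_ring := apply/ffunP => ?; apply/matrixP => ? ?; rewrite !ffunE !mxE; ring.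

Lemma le0_of_le_mul_small {R : realType} (p q : R) : 0 <= q ->
  (forall a, 0 < a <= 1 -> 2 * p <= a * q) -> p <= 0.
Proof.
move=> q0 small; rewrite leNgt; apply/negP => p0.
have pq : 0 < p + q by lra.
have a01 : 0 < p / (p + q) <= 1 by rewrite divr_gt0 //= ler_pdivrMr // mul1r; lra.
have := small _ a01.
have : p / (p + q) * q <= p by rewrite mulrAC ler_pdivrMr // ler_pM2l //; lra.
lra.
Qed.

Lemma geom_sum_sqr_le {R : realType} n (gamma : R) : 0 < gamma <= 1 ->
  gamma ^+ 2 * \sum_(i < n) ((1 - gamma) ^+ 2) ^+ i <= 1.
Proof.
move=> /andP[g0 g1]; set q := (1 - gamma) ^+ 2.
have q0 : 0 <= q := sqr_ge0 _.
have sum_ge0 : 0 <= \sum_(i < n) q ^+ i by apply: sumr_ge0 => i _; exact: exprn_ge0.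
have geom : (1 - q) * \sum_(i < n) q ^+ i = 1 - q ^+ n.
  by rewrite -[1 - q]opprB mulNr -subrX1 opprB.
have : (1 - q) * \sum_(i < n) q ^+ i <= 1 by rewrite geom lerBlDr lerDl exprn_ge0.
apply: le_trans; apply: ler_wpM2r => //; rewrite /q; nra.
Qed.

Section ConstraintSet.
Context {R : realType} {nx nu H : nat}.
Context {B : 'M[R]_(nx, nu)} {kappa gamma : R}.
Implicit Types X Y M P Q : Mtype R nu nx H.
Local Notation inM := (inMset B kappa gamma).

Lemma inMset_convex P Q a : 0 <= a <= 1 -> inM P -> inM Q -> inM (a *: P + (1 - a) *: Q).
Proof.
move=> /andP[a0 a1] hP hQ i; rewrite !ffunE.
apply: le_trans (opnorm_lincomb_le _ _ _ _) _.
rewrite ger0_norm // ger0_norm ?subr_ge0 //.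
apply: le_trans (lerD (ler_wpM2l a0 (hP i)) (ler_wpM2l _ (hQ i))) _; first lra.
by rewrite -mulrDl addrC subrK mul1r.
Qed.

Lemma proj_inner_le0 {X Y} M : is_proj B kappa gamma X Y -> inM M ->
  frob_inner (X - Y) (M - Y) <= 0.
Proof.
move=> [inY Ymin] inMM; apply: le0_of_le_mul_small (sqr_ge0 (frob (M - Y))) _.
move=> a /andP[a0 a1]; have a01 : 0 <= a <= 1 by rewrite (ltW a0).
have := Ymin _ (inMset_convex M Y a a01 inMM inY).
have -> : X - (a *: M + (1 - a) *: Y) = (X - Y) + (- a) *: (M - Y) by mtype_ring.
rewrite -ler_sqr ?nnegrE ?frob_ge0 // (frob_sqrD (X - Y)) frobZ frob_innerZr exprMn normrN.
by rewrite real_normK ?num_real //; nra.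
Qed.

Lemma proj_frob_le {X Y} M : is_proj B kappa gamma X Y -> inM M ->
  frob (Y - M) <= frob (X - M).
Proof.
move=> XY inMM; have obtuse := proj_inner_le0 M XY inMM.
have -> : X - M = (X - Y) - (M - Y) by mtype_ring.
rewrite -ler_sqr ?nnegrE ?frob_ge0 // (frob_sqrB (X - Y)) (frobC Y M).
by have := sqr_ge0 (frob (X - Y)); lra.
Qed.

Lemma inMset_sub_opnorm_le {P Q} (i : 'I_H) : inM P -> inM Q ->
  opnorm ((P - Q) i) <= 4 * (kappaB B * kappa ^+ 3) * (1 - gamma) ^+ i.
Proof.
move=> inP inQ; rewrite !ffunE -scaleN1r -[P i]scale1r.
apply: le_trans (opnorm_lincomb_le _ _ _ _) _.
by rewrite normrN normr1 !mul1r; have := inP i; have := inQ i; lra.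
Qed.

Lemma inMset_diameter {P Q} : 0 < gamma <= 1 -> inM P -> inM Q ->
  frob (P - Q) ^+ 2 <=
  (4 * kappaB B * kappa ^+ 3 * Num.sqrt (maxn nx nu)%:R / gamma) ^+ 2.
Proof.
move=> g01 inP inQ; have [g0 _] := andP g01.
set c := kappaB B * kappa ^+ 3; set q := (1 - gamma) ^+ 2.
have -> : (4 * kappaB B * kappa ^+ 3 * Num.sqrt (maxn nx nu)%:R / gamma) ^+ 2
    = 16 * c ^+ 2 * (maxn nx nu)%:R / gamma ^+ 2.
  by rewrite /c expr_div_n !exprMn sqr_sqrtr //; congr (_ / _); ring.
have frob_le : frob (P - Q) ^+ 2 <= 16 * c ^+ 2 * nx%:R * \sum_(i < H) q ^+ i.
  rewrite /frob sqr_sqrtr; last by do 2![apply: sumr_ge0 => ? _]; exact: sum_sqr_ge0.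
  rewrite mulr_sumr; apply: ler_sum => i _; apply: le_trans (sum_sqr_le_opnorm _) _.
  have opn := inMset_sub_opnorm_le i inP inQ.
  have sq_le : opnorm ((P - Q) i) ^+ 2 <= (4 * c * (1 - gamma) ^+ i) ^+ 2.
    by rewrite ler_pXn2r ?nnegrE ?opnorm_ge0 // (le_trans (opnorm_ge0 _) opn).
  apply: le_trans (ler_wpM2l (ler0n _ nx) sq_le) _.
  by rewrite /q -exprM mulnC exprM le_eqVlt; apply/orP; left; apply/eqP; ring.
apply: le_trans frob_le _; rewrite ler_pdivlMr ?exprn_gt0 //.
have geom := geom_sum_sqr_le H gamma g01; rewrite -/q in geom.
have c16 : 0 <= 16 * c ^+ 2 by rewrite mulr_ge0 ?sqr_ge0.
apply: (@le_trans _ _ (16 * c ^+ 2 * nx%:R)).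
  rewrite [leLHS](_ : _ = 16 * c ^+ 2 * nx%:R * (gamma ^+ 2 * \sum_(i < H) q ^+ i)).
    by rewrite -[leRHS]mulr1; apply: ler_wpM2l => //; exact: mulr_ge0.
  by ring.
by apply: ler_wpM2l => //; rewrite ler_nat leq_maxl.
Qed.

End ConstraintSet.

Section SurrogateCost.
Context {R : realType} {nx nu H : nat}.
Context {A : 'M[R]_nx} {B : 'M[R]_(nx, nu)} {K : 'M[R]_(nu, nx)}
  {w : int -> 'cV[R]_nx} {c : int -> 'cV[R]_nx * 'cV[R]_nu -> R}.
Implicit Types X Y : Mtype R nu nx H.

Lemma Fsur_eq_window (t : nat) (N N' : int -> Mtype R nu nx H) :
  (forall s : int, s < 0 -> w s = 0) ->
  (forall s : int, 0 <= s -> t%:Z - 1 - H%:Z <= s <= t%:Z -> N s = N' s) ->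
  Fsur A B K w c t N = Fsur A B K w c t N'.
Proof.
move=> w_neg NN'; rewrite /Fsur /vsur.
have -> : ysur A B K w N t = ysur A B K w N' t.
  apply: eq_bigr => i _; have [it|ti] := ltnP i t.
    congr (_ *m _); congr (_ + _); apply: eq_bigr => j _.
    case: ifP => // /andP[ji _]; have jH := ltn_ord j; rewrite NN' //; lia.
  (* for i >= t the factor w_{t-1-i} vanishes, so no M_s with s < 0 is read *)
  by rewrite w_neg ?mulmx0 //; lia.
by rewrite NN' //; lia.
Qed.

Lemma Mcomp_lincomb a b X Y k :
  Mcomp (a *: X + b *: Y) k = a *: Mcomp X k + b *: Mcomp Y k.
Proof.
by rewrite /Mcomp; case: insub => [i|]; [rewrite !ffunE | rewrite !scaler0 addr0].
Qed.

Lemma Psi_affine a b X Y t h i : a + b = 1 ->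
  Psi A B K (fun _ => a *: X + b *: Y) t h i =
  a *: Psi A B K (fun _ => X) t h i + b *: Psi A B K (fun _ => Y) t h i.
Proof.
move=> ab; rewrite /Psi !scalerDr addrACA -scalerDl ab scale1r.
rewrite !scaler_sumr -big_split; congr (_ + _); apply: eq_bigr => j _.
case: ifP => _; first by rewrite Mcomp_lincomb mulmxDr !scalemxAr.
by apply/esym; rewrite !scaler0; exact: addr0.
Qed.

Lemma ysur_affine a b X Y t : a + b = 1 ->
  ysur A B K w (fun _ => a *: X + b *: Y) t =
  a *: ysur A B K w (fun _ => X) t + b *: ysur A B K w (fun _ => Y) t.
Proof.
move=> ab; rewrite /ysur !scaler_sumr -big_split; apply: eq_bigr => i _.
by rewrite Psi_affine // mulmxDl !scalemxAl.
Qed.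

Lemma vsur_affine a b X Y t : a + b = 1 ->
  vsur A B K w (fun _ => a *: X + b *: Y) t =
  a *: vsur A B K w (fun _ => X) t + b *: vsur A B K w (fun _ => Y) t.
Proof.
move=> ab; rewrite /vsur ysur_affine // mulmxDr -!scalemxAr opprD !scalerDr !scalerN.
rewrite addrACA; congr (_ + _); rewrite !scaler_sumr -big_split; apply: eq_bigr => i _.
by rewrite !ffunE mulmxDl -!scalemxAl.
Qed.

Lemma fsur_convex t : convex_fun (c t) -> convex_fun (fsur A B K w c t : Mtype R nu nx H -> R).
Proof.
move=> ct_convex X Y a a01.
rewrite /fsur /Fsur ysur_affine ?vsur_affine ?subrKC //.
exact: (ct_convex (ysur A B K w (fun _ => X) t, vsur A B K w (fun _ => X) t)
                  (ysur A B K w (fun _ => Y) t, vsur A B K w (fun _ => Y) t)).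
Qed.

End SurrogateCost.

Lemma is_gradient_convex_le {R : realType} {nu nx H : nat}
    {f : Mtype R nu nx H -> R} {M0 G : Mtype R nu nx H} (M : Mtype R nu nx H) :
  convex_fun f -> is_gradient f M0 G -> f M0 - f M <= frob_inner G (M0 - M).
Proof.
move=> f_convex f_grad.
pose phi s := f (M0 + s *: (M - M0)).
have phi_convex s1 s2 a : 0 <= a <= 1 ->
    phi (a * s1 + (1 - a) * s2) <= a * phi s1 + (1 - a) * phi s2.
  move=> a01; rewrite /phi.
  have -> : M0 + (a * s1 + (1 - a) * s2) *: (M - M0) =
      a *: (M0 + s1 *: (M - M0)) + (1 - a) *: (M0 + s2 *: (M - M0)) by mtype_ring.
  exact: f_convex.
have := convex_derive0_le phi_convex _ (f_grad (M - M0)).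
by rewrite /phi scale0r addr0 scale1r subrKC !frob_innerBr; lra.
Qed.

Section ProjectedGradientDescent.
Context {R : realType} {nx nu H : nat}.
Context {B : 'M[R]_(nx, nu)} {kappa gamma eta : R} {T : nat}.
Context {Ms g : int -> Mtype R nu nx H}.
Hypothesis eta_gt0 : 0 < eta.
Hypothesis Ms0_in : inMset B kappa gamma (Ms 0).
Hypothesis Ms_proj : forall t : nat, (t.+1 < T)%N ->
  is_proj B kappa gamma (Ms t - eta *: g t) (Ms (t.+1)%:Z).

Lemma ogd_inMset (t : nat) : (t < T)%N -> inMset B kappa gamma (Ms t).
Proof. by case: t => [|t] tT; [exact: Ms0_in | case: (Ms_proj _ tT)]. Qed.

Lemma ogd_step_le (t : nat) : (t.+1 < T)%N ->
  frob (Ms t.+1 - Ms t) <= eta * frob (g t).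
Proof.
move=> tT; have := proj_frob_le (Ms t) (Ms_proj _ tT) (ogd_inMset _ (ltnW tT)).
by rewrite addrAC subrr add0r frobN frobZ gtr0_norm.
Qed.

Lemma ogd_drift (t i : nat) : (t < T)%N -> (i <= t)%N ->
  frob (Ms (t%:Z - i%:Z) - Ms t) <= eta * \sum_(1 <= k < i.+1) frob (g (t%:Z - k%:Z)).
Proof.
move=> tT; elim: i => [|i IH] it; first by rewrite subr0 subrr frob0 big_geq ?mulr0.
rewrite big_nat_recr //= mulrDr.
have -> : Ms (t%:Z - i.+1%:Z) - Ms t =
    (Ms (t%:Z - i.+1%:Z) - Ms (t%:Z - i%:Z)) + (Ms (t%:Z - i%:Z) - Ms t).
  by rewrite addrA subrK.
apply: le_trans (frobD _ _) _; rewrite addrC; apply: lerD; first exact: IH (ltnW it).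
have -> : t%:Z - i%:Z = (t - i.+1)%N.+1 by lia.
have -> : t%:Z - i.+1%:Z = (t - i.+1)%N by lia.
by rewrite frobC; apply: ogd_step_le; lia.
Qed.

Lemma ogd_inner_regret M : inMset B kappa gamma M ->
  \sum_(t < T) frob_inner (g t) (Ms t - M)
  <= frob (Ms 0 - M) ^+ 2 / (2 * eta) + eta / 2 * \sum_(t < T) frob (g t) ^+ 2.
Proof.
move=> inMM.
(* cut off at T, so that the last round telescopes like the others *)
pose u (t : nat) := if (t < T)%N then frob (Ms t - M) ^+ 2 else 0.
have step (t : nat) : (t < T)%N -> frob_inner (g t) (Ms t - M)
    <= (u t - u t.+1) / (2 * eta) + eta / 2 * frob (g t) ^+ 2.
  move=> tT.
  have expand : frob (Ms t - eta *: g t - M) ^+ 2 = frob (Ms t - M) ^+ 2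
      - 2 * eta * frob_inner (g t) (Ms t - M) + eta ^+ 2 * frob (g t) ^+ 2.
    have -> : Ms t - eta *: g t - M = (Ms t - M) + (- eta) *: g t by mtype_ring.
    rewrite frob_sqrD frobZ exprMn normrN real_normK ?num_real // frob_innerZr.
    by rewrite frob_innerC; ring.
  have next : u t.+1 <= frob (Ms t - eta *: g t - M) ^+ 2.
    rewrite /u; case: ifP => [tT'|_]; last exact: sqr_ge0.
    by rewrite ler_pXn2r ?nnegrE ?frob_ge0 // (proj_frob_le M (Ms_proj _ tT')).
  have ut : u t = frob (Ms t - M) ^+ 2 by rewrite /u tT.
  rewrite -(@ler_pM2l _ (2 * eta)) ?mulr_gt0 // mulrDr.
  have eta2 : 2 * eta != 0 by rewrite gt_eqF // mulr_gt0.
  rewrite [2 * eta * (_ / _)]mulrC divfK //.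
  have -> : 2 * eta * (eta / 2 * frob (g t) ^+ 2) = eta ^+ 2 * frob (g t) ^+ 2 by field.
  lra.
have telescope : \sum_(t < T) (u t - u t.+1) <= frob (Ms 0 - M) ^+ 2.
  rewrite -(big_mkord xpredT (fun t => u t - u t.+1)) -[leLHS]opprK -sumrN.
  under eq_bigr do rewrite opprB.
  rewrite telescope_sumr // opprB /u ltnn subr0.
  by case: ifP => _; [exact: lexx | exact: sqr_ge0].
apply: le_trans (ler_sum _ (fun (t : 'I_T) _ => step t (ltn_ord t))) _.
rewrite big_split /= -mulr_suml -mulr_sumr lerD2r.
by apply: ler_wpM2r => //; rewrite invr_ge0 mulr_ge0 // ltW.
Qed.

End ProjectedGradientDescent.

Definition freeze_recent {R : realType} {nu nx H : nat} (Ms : int -> Mtype R nu nx H)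
    (t j : nat) : int -> Mtype R nu nx H :=
  fun r => if (t%:Z - j%:Z <= r) && (r < t%:Z) then Ms t else Ms r.

Lemma freeze_recent0 {R : realType} {nu nx H : nat} (Ms : int -> Mtype R nu nx H) t :
  freeze_recent Ms t 0 = Ms.
Proof. by apply: funext => r; rewrite /freeze_recent; case: ifP => //; lia. Qed.

Lemma freeze_recentS {R : realType} {nu nx H : nat} (Ms : int -> Mtype R nu nx H) t j :
  freeze_recent Ms t j.+1 = upd (freeze_recent Ms t j) (t%:Z - j.+1%:Z) (Ms t).
Proof.
apply: funext => r; rewrite /upd /freeze_recent.
have [->|r_neq] := eqVneq r (t%:Z - j.+1%:Z); first by case: ifP => //; lia.
by do 2!case: ifP => //; lia.
Qed.

Section MemoryCost.
Context {R : realType} {nx nu H : nat}.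
Context {A : 'M[R]_nx} {B : 'M[R]_(nx, nu)} {K : 'M[R]_(nu, nx)}
  {w : int -> 'cV[R]_nx} {c : int -> 'cV[R]_nx * 'cV[R]_nu -> R}
  {kappa gamma Lc : R} {T : nat} {Ms : int -> Mtype R nu nx H}.
Hypothesis w_neg : forall s : int, s < 0 -> w s = 0.
Hypothesis F_lipschitz : forall (k t : nat), (k <= H.+1)%N -> (t < T)%N ->
  forall (N : int -> Mtype R nu nx H) (Mc : Mtype R nu nx H),
    (forall s : int, t%:Z - 1 - H%:Z <= s <= t%:Z -> inMset B kappa gamma (N s)) ->
    inMset B kappa gamma Mc ->
    `| Fsur A B K w c t N - Fsur A B K w c t (upd N (t%:Z - k%:Z) Mc) |
      <= Lc * frob (N (t%:Z - k%:Z) - Mc).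

Lemma Fsur_freeze_recent (t : nat) :
  Fsur A B K w c t (freeze_recent Ms t (minn H.+1 t)) = fsur A B K w c t (Ms t).
Proof.
apply: Fsur_eq_window => // s s0 /andP[lo hi]; rewrite /freeze_recent.
by case: ifP => // recent; have [->|] := eqVneq s t%:Z => //; lia.
Qed.

Lemma Fsur_sub_freeze_recent_le (t j : nat) : (t < T)%N -> (j <= minn H.+1 t)%N ->
  (forall s : int, t%:Z - 1 - H%:Z <= s <= t%:Z -> inMset B kappa gamma (Ms s)) ->
  Fsur A B K w c t Ms - Fsur A B K w c t (freeze_recent Ms t j)
  <= Lc * \sum_(1 <= i < j.+1) frob (Ms (t%:Z - i%:Z) - Ms t).
Proof.
move=> tT + window; elim: j => [|j IH] jt.
  by rewrite freeze_recent0 subrr big_geq ?mulr0.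
have frozen_in s : t%:Z - 1 - H%:Z <= s <= t%:Z ->
    inMset B kappa gamma (freeze_recent Ms t j s).
  move=> s_in; rewrite /freeze_recent; case: ifP => _; last exact: window.
  by apply: window; lia.
have jH : (j.+1 <= H.+1)%N by lia.
have Mt_in : inMset B kappa gamma (Ms t) by apply: window; lia.
have := F_lipschitz _ _ jH tT _ _ frozen_in Mt_in.
rewrite -freeze_recentS /freeze_recent ifF; last by lia.
move=> /(le_trans (ler_norm _)) lip_step.
rewrite big_nat_recr //= mulrDr; have := IH (ltnW jt); lra.
Qed.

Lemma Fsur_sub_fsur_le (t : nat) : (t < T)%N ->
  (forall s : int, t%:Z - 1 - H%:Z <= s <= t%:Z -> inMset B kappa gamma (Ms s)) ->
  Fsur A B K w c t Ms - fsur A B K w c t (Ms t)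
  <= Lc * \sum_(1 <= i < (minn H.+1 t).+1) frob (Ms (t%:Z - i%:Z) - Ms t).
Proof.
move=> tT window; rewrite -Fsur_freeze_recent.
exact: Fsur_sub_freeze_recent_le.
Qed.

End MemoryCost.

Theorem proposition2 (R : realType) (nx nu H T : nat)
  (A : 'M[R]_nx) (B : 'M[R]_(nx, nu)) (K : 'M[R]_(nu, nx))
  (kappa gamma eta Lc : R)
  (w : int -> 'cV[R]_nx) (c : int -> 'cV[R]_nx * 'cV[R]_nu -> R)
  (Ms : int -> Mtype R nu nx H) (g : int -> Mtype R nu nx H) :
  (0 < H)%N ->
  strongly_stable A B K kappa gamma ->
  (forall s : int, s < 0 -> w s = 0) ->
  (forall (t : int) (z : 'cV[R]_nx * 'cV[R]_nu), differentiable (c t) z) ->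
  (forall t : int, convex_fun (c t)) ->
  0 < eta ->
  (forall t : int, - (H%:Z + 1) <= t <= 0 -> inMset B kappa gamma (Ms t)) ->
  (forall t : nat, (t < T)%N -> is_gradient (fsur A B K w c t) (Ms t) (g t)) ->
  (forall t : nat, (t.+1 < T)%N ->
     is_proj B kappa gamma (Ms t - eta *: g t) (Ms (t.+1)%:Z)) ->
  0 < Lc ->
  (forall (k t : nat), (k <= H.+1)%N -> (t < T)%N ->
     forall (N : int -> Mtype R nu nx H) (Mc : Mtype R nu nx H),
       (forall s : int, t%:Z - 1 - H%:Z <= s <= t%:Z -> inMset B kappa gamma (N s)) ->
       inMset B kappa gamma Mc ->
       `| Fsur A B K w c t N - Fsur A B K w c t (upd N (t%:Z - k%:Z) Mc) |
         <= Lc * frob (N (t%:Z - k%:Z) - Mc)) ->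
  forall M : Mtype R nu nx H, inMset B kappa gamma M ->
  let D := 4 * kappaB B * kappa ^+ 3 * Num.sqrt ((maxn nx nu)%:R) / gamma in
  \sum_(t < T) Fsur A B K w c t Ms - \sum_(t < T) fsur A B K w c t M
  <= Lc * eta * \sum_(t < T) \sum_(1 <= i < (minn H.+1 t).+1)
                   \sum_(1 <= k < i.+1) frob (g (t%:Z - k%:Z))
     + D ^+ 2 / (2 * eta)
     + eta / 2 * \sum_(t < T) frob (g t) ^+ 2.
Proof.
move=> _ stable w_neg _ c_convex eta_gt0 init_in grad ogd Lc_gt0 F_lip M inMM; cbv zeta.
have Ms0_in : inMset B kappa gamma (Ms 0) by apply: init_in; lia.
have Ms_in (s : int) : - (H%:Z + 1) <= s -> s < T%:Z -> inMset B kappa gamma (Ms s).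
  case: s => [n|n] lo hi; last by apply: init_in; lia.
  by case: n lo hi => [|n] lo hi //; apply: (ogd_inMset Ms0_in ogd); lia.
have per_step (t : 'I_T) :
    Fsur A B K w c t Ms - fsur A B K w c t M
    <= Lc * eta * \sum_(1 <= i < (minn H.+1 t).+1) \sum_(1 <= k < i.+1) frob (g (t%:Z - k%:Z))
       + frob_inner (g t) (Ms t - M).
  have tT := ltn_ord t.
  have window (s : int) : t%:Z - 1 - H%:Z <= s <= t%:Z -> inMset B kappa gamma (Ms s).
    by move=> /andP[lo hi]; apply: Ms_in; lia.
  have memory := Fsur_sub_fsur_le w_neg F_lip _ tT window.
  have grad_le := is_gradient_convex_le M (fsur_convex _ (c_convex t)) (grad t tT).
  have drift : \sum_(1 <= i < (minn H.+1 t).+1) frob (Ms (t%:Z - i%:Z) - Ms t)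
      <= eta * \sum_(1 <= i < (minn H.+1 t).+1) \sum_(1 <= k < i.+1) frob (g (t%:Z - k%:Z)).
    rewrite mulr_sumr; apply: ler_sum_nat => i /andP[i1 i2].
    by apply: (ogd_drift eta_gt0 Ms0_in ogd); lia.
  have := ler_wpM2l (ltW Lc_gt0) drift; rewrite mulrA; lra.
rewrite -sumrB; apply: le_trans (ler_sum _ (fun (t : 'I_T) (_ : true) => per_step t)) _.
rewrite big_split /= -mulr_sumr -addrA lerD2l.
apply: le_trans (ogd_inner_regret eta_gt0 ogd M inMM) _; rewrite lerD2r.
apply: ler_wpM2r; first by rewrite invr_ge0 mulr_ge0 // ltW.
exact: inMset_diameter (strongly_stable_gamma stable) Ms0_in inMM.
Qed.
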